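(* Assume Hypothesis 1 (stated in the context). Then: 1. $X_{\max}=T_{C_{\max}}\rtimes X_{\mathbf 0}$; 2. $C_{\max}$ is $(X_{\max},2)$-neighbour-transitive and $\delta_{\max}\ge5$; 3. the kernel $K$ of the action of $X$ on $M$ equals the kernel of the action of $X_{\max}$ on $M$, namely $K=X\cap B=X_{\max}\cap B=T_{C_{\max}}$; 4. $C_{\max}$ is an $\mathbb F_2X_{\mathbf 0}$-module; 5. $|C|/|C_{\max}|=|X|/|X_{\max}|=|X^M|/|X_{\mathbf 0}^M|$.
   Context: $H(m,2)$: vertex set $\mathbb F_2^m$, coordinates indexed by a set $M$, $|M|=m$, adjacency when differing in exactly one coordinate; $d$ Hamming distance. For a code $C$: minimum distance $\delta$, covering radius $\rho=\max_\alpha d(\alpha,C)$, $C_i=\{\alpha:d(\alpha,C)=i\}$. $\mathrm{Aut}(H(m,2))=B\rtimes L$, $B\cong\mathbb Z_2^m$ the translations $t_\beta:\alpha\mapsto\alpha+\beta$, $L\cong\mathrm{Sym}(M)$ coordinate permutations; $\mathrm{Aut}(C)$ is the setwise stabiliser of $C$. For $X\le B\rtimes L$, $X^M$ is the permutation group induced on $M$ (image in $L$), $X_{\mathbf 0}$ the stabiliser of $\mathbf 0$. $C$ is $(X,s)$-neighbour-transitive if $X\le\mathrm{Aut}(C)$ is transitive on each of $C,C_1,\dots,C_s$; completely transitive if $\mathrm{Aut}(C)$ is transitive on each of $C,C_1,\dots,C_\rho$. For a linear code $D$, $T_D=\{t_\beta:\beta\in D\}$. For a code $C\ni\mathbf 0$,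 the maximal linear subcode $C_{\max}$ is the largest linear subcode $D\subseteq C$ with $T_D\le\mathrm{Aut}(C)$. Hypothesis 1: $C$ is a completely transitive code in $H(m,2)$ with $\mathbf 0\in C$ and minimum distance $\delta\ge5$; $X=\mathrm{Aut}(C)$; $C_{\max}$ is the maximal linear subcode of $C$ with minimum distance $\delta_{\max}$; $X_{\max}$ is the setwise stabiliser of $C_{\max}$ in $X$; and $2\le\dim C_{\max}\le m-2$. *)

From HB Require Import structures.
From mathcomp Require Import all_boot all_order all_algebra all_fingroup.
Set Implicit Arguments. Unset Strict Implicit. Unset Printing Implicit Defensive.
Import GRing.Theory.

(* The Hamming graph H(m,2): vertices are row vectors 'rV['F_2]_m,
   coordinate set M = 'I_m. Automorphisms are represented as permutations
   of the vertex set. *)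

Notation vert m := ('rV['F_2]_m).

Section Hamming.
Variable m : nat.
Local Notation V := (vert m).
Local Open Scope ring_scope.

Definition hdist (x y : V) : nat := #|[set i : 'I_m | x 0 i != y 0 i]|.

Lemma tr_inj (b : V) : injective (fun a : V => a + b).
Proof. exact: addIr. Qed.
Definition tr (b : V) : {perm V} := perm (@tr_inj b).

Lemma cperm_inj (s : 'S_m) : injective (fun a : V => col_perm s a).
Proof.
move=> a b /(congr1 (col_perm s^-1)); rewrite -!col_permM mulVg !col_perm1 //.
Qed.
Definition cperm (s : 'S_m) : {perm V} := perm (@cperm_inj s).

Definition Btr : {set {perm V}} := [set tr b | b in [set: V]].
Definition Lco : {set {perm V}} := [set cperm s | s in [set: 'S_m]].
Definition AutH : {set {perm V}} := (Btr * Lco)%g.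

Definition TD (D : {set V}) : {set {perm V}} := [set tr b | b in D].

Definition AutC (C : {set V}) : {set {perm V}} :=
  [set g in AutH | [set g x | x in C] == C].

Definition setstab (X : {set {perm V}}) (D : {set V}) : {set {perm V}} :=
  [set g in X | [set g x | x in D] == D].

Definition stab0 (X : {set {perm V}}) : {set {perm V}} :=
  [set g in X | g 0 == 0].

(* the L-part of g in B L : g = (linpart g) followed by t_{g 0};
   X^M is realised as the image of X in L *)
Definition linpart (g : {perm V}) : {perm V} := (g * tr (- g 0))%g.
Definition onM (X : {set {perm V}}) : {set {perm V}} := [set linpart g | g in X].
Definition kerM (X : {set {perm V}}) : {set {perm V}} :=
  [set g in X | linpart g == 1%g].

Definition dcode (C : {set V}) (a : V) : nat := \big[minn/m]_(c in C) hdist a c.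
Definition Ci (C : {set V}) (i : nat) : {set V} := [set a | dcode C a == i].
Definition covrad (C : {set V}) : nat := \max_(a : V) dcode C a.

Definition mindist_ge (C : {set V}) (d : nat) : Prop :=
  forall x y, x \in C -> y \in C -> x != y -> (d <= hdist x y)%N.

Definition nbr_trans (X : {set {perm V}}) (C : {set V}) (s : nat) : Prop :=
  X \subset AutC C /\
  forall i, (i <= s)%N -> [transitive X, on Ci C i | 'P].

Definition completely_transitive (C : {set V}) : Prop :=
  forall i, (i <= covrad C)%N -> [transitive AutC C, on Ci C i | 'P].

Definition lin_code (D : {set V}) : Prop :=
  0 \in D /\ forall x y, x \in D -> y \in D -> x + y \in D.

Definition dimc (D : {set V}) : nat := \dim (<<enum D>>%VS).

Definition is_max_lin_subcode (C D : {set V}) : Prop :=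
  [/\ lin_code D, D \subset C, TD D \subset AutC C &
      forall D', lin_code D' -> D' \subset C -> TD D' \subset AutC C ->
                 D' \subset D].

End Hamming.

From mathcomp Require Import all_boot all_order all_algebra all_fingroup.
From mathcomp Require Import zify.
Import GRing.Theory Num.Theory.
Set Implicit Arguments. Unset Strict Implicit. Unset Printing Implicit Defensive.

(* Translations by vectors of [C_max] are exactly the translations lying in
   [X = Aut(C)]: the set of [b] with [t_b] in [X] is a linear subcode of [C]
   whose translations lie in [X], so maximality puts it inside [C_max].  An
   element of [X_0] is linear, so it conjugates [t_b] to [t_(g b)]; hence [X_0]
   normalises [T_(C_max)] and preserves [C_max], and every [g] in [X_max]
   factors as its linear part (in [X_0]) times [t_(g 0)] (in [T_(C_max)]).
   For [i <= 2] and minimum distance [5], a word at distance [i] from [C_max],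
   translated by a nearest codeword of [C_max], becomes a word of weight [i],
   hence lies in [C_i]; an element of [X] carrying it to a fixed weight-[i]
   word must fix [0], so composing with the translation gives an element of
   [X_max].  This transfers the transitivity of [X] on [C_i] to [X_max] on
   [(C_max)_i].
   The index formulas come from orbit-stabiliser for [X] on [C],
   [|X_max| = |C_max| |X_0|], and the kernel [X :&: B = T_(C_max)] of the
   action on coordinates. *)

Section HammingGraph.
Local Open Scope ring_scope.
Local Open Scope group_scope.

Variable m : nat.
Local Notation V := (vert m).
Implicit Types (x y a b c w : V) (s : 'S_m) (g h : {perm V}) (D : {set V}).
Implicit Types (X : {set {perm V}}).

Lemma trE b x : tr b x = x + b.
Proof. by rewrite permE. Qed.

Lemma tr0 : tr (0 : V) = 1.
Proof. by apply/permP => x; rewrite trE perm1 addr0. Qed.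

Lemma trD a b : tr (a + b) = tr a * tr b.
Proof. by apply/permP => x; rewrite permM !trE addrA. Qed.

Lemma trN b : tr (- b) = (tr b)^-1.
Proof. by apply: (mulgI (tr b)); rewrite -trD subrr tr0 mulgV. Qed.

Lemma tr_inj : injective (@tr m).
Proof. by move=> a b /(congr1 (fun g => g 0)); rewrite !trE !add0r. Qed.

Lemma tr_Btr b : tr b \in Btr m.
Proof. exact: imset_f. Qed.

Lemma col_permD s x y : col_perm s (x + y) = col_perm s x + col_perm s y.
Proof. by rewrite !col_permE mulmxDl. Qed.

Lemma col_perm0 s : col_perm s (0 : V) = 0.
Proof. by rewrite col_permE mul0mx. Qed.

Definition affine g := exists s b, forall x, g x = col_perm s x + b.

Lemma AutHP g : reflect (affine g) (g \in AutH m).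
Proof.
apply: (iffP mulsgP) => [[_ _ /imsetP[b _ ->] /imsetP[s _ ->] ->]|[s [b gE]]].
  by exists s, (col_perm s b) => x; rewrite permM permE trE col_permD.
exists (tr (col_perm s^-1 b)) (cperm s); rewrite ?imset_f //.
by apply/permP => x; rewrite permM permE trE col_permD gE -col_permM mulgV col_perm1.
Qed.

Lemma group_set_AutH : group_set (AutH m).
Proof.
apply/group_setP; split.
  by apply/AutHP; exists 1, 0 => x; rewrite perm1 col_perm1 addr0.
move=> g h /AutHP[s [b gE]] /AutHP[t [c hE]]; apply/AutHP.
exists (t * s), (col_perm t b + c) => x.
by rewrite permM gE hE col_permD col_permM addrA.
Qed.
Canonical AutH_group := Group group_set_AutH.

Lemma hdistC x y : hdist x y = hdist y x.
Proof. by apply: eq_card => i; rewrite !inE eq_sym. Qed.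

Lemma hdistDr b x y : hdist (x + b) (y + b) = hdist x y.
Proof. by apply: eq_card => i; rewrite !inE !mxE (inj_eq (addIr _)). Qed.

Lemma hdist_col_perm s x y : hdist (col_perm s x) (col_perm s y) = hdist x y.
Proof.
rewrite /hdist -[RHS](card_preimset _ (@perm_inj _ s)).
by apply: eq_card => i; rewrite !inE !mxE.
Qed.

Lemma hdist_AutH g x y : g \in AutH m -> hdist (g x) (g y) = hdist x y.
Proof. by case/AutHP=> s [b gE]; rewrite !gE hdistDr hdist_col_perm. Qed.

Lemma hdist_sub0 x c : hdist (x - c) 0 = hdist x c.
Proof. by rewrite -(subrr c) hdistDr. Qed.

Lemma hdist_triangle x y z : (hdist x z <= hdist x y + hdist y z)%N.
Proof.
apply: leq_trans (leq_card_setU _ _); apply/subset_leq_card/subsetP => i.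
rewrite !inE; apply: contraLR; rewrite negb_or !negbK.
by case/andP=> /eqP-> /eqP->.
Qed.

Lemma hdistxx x : hdist x x = 0%N.
Proof. by apply: eq_card0 => i; rewrite !inE eqxx. Qed.

Lemma hdist_eq0 x y : hdist x y = 0%N -> x = y.
Proof.
move/eqP; rewrite cards_eq0 => /eqP xy; apply/rowP => i.
by apply/eqP; apply: contraFT (in_set0 i); rewrite -xy inE.
Qed.

Lemma hdist_le_dim x y : (hdist x y <= m)%N.
Proof. by rewrite -{2}[m]card_ord max_card. Qed.

Lemma exists_weight i : (i <= m)%N -> exists w : V, hdist w 0 = i.
Proof.
move=> im; exists (\row_j if (j < i)%N then 1%R else 0).
rewrite /hdist (eq_card (B := [pred j : 'I_m | (j < i)%N])) => [|j].
  have -> : #|[pred j : 'I_m | (j < i)%N]| = (\sum_(j < m | (j < i)%N) 1)%N.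
    by rewrite -sum1_card.
  by rewrite -(big_ord_widen _ (fun=> 1%N) im) big_const_ord iter_addn_0 mul1n.
by rewrite !inE !mxE; case: ifP; rewrite ?oner_eq0 ?eqxx.
Qed.

Lemma dcode_le D a c : c \in D -> (dcode D a <= hdist a c)%N.
Proof. exact: (@Order.TotalTheory.bigmin_le_cond _ nat). Qed.

Lemma dcode_ge D a k : (k <= m)%N -> (forall c, c \in D -> k <= hdist a c)%N ->
  (k <= dcode D a)%N.
Proof. exact: (@Order.POrderTheory.le_bigmin _ nat). Qed.

Lemma dcode_attained D a c0 : c0 \in D -> exists2 c, c \in D & dcode D a = hdist a c.
Proof.
move=> c0D; have [c cD cmin] := arg_minnP (hdist a) c0D.
exists c => //; apply/eqP; rewrite eqn_leq dcode_le //=.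
by apply: dcode_ge; [exact: hdist_le_dim | exact: cmin].
Qed.

Lemma Ci0 D c0 : c0 \in D -> Ci D 0 = D.
Proof.
move=> c0D; apply/setP => x; rewrite inE; apply/eqP/idP => [|xD].
  by have [c cD -> /hdist_eq0 ->] := dcode_attained x c0D.
by apply/eqP; rewrite -leqn0 -(hdistxx x) dcode_le.
Qed.

Lemma dcode_AutH D g a c0 : c0 \in D -> g \in AutH m -> [set g x | x in D] = D ->
  dcode D (g a) = dcode D a.
Proof.
move=> c0D gA gD; have [c cD ac] := dcode_attained a c0D.
apply/eqP; rewrite eqn_leq; apply/andP; split.
  by rewrite ac -(hdist_AutH _ _ gA) dcode_le // -gD imset_f.
apply: dcode_ge => [|y]; first by rewrite ac hdist_le_dim.
by rewrite -{1}gD => /imsetP[x xD ->]; rewrite hdist_AutH // dcode_le.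
Qed.

Lemma mindist_ge_sub D D' d : D' \subset D -> mindist_ge D d -> mindist_ge D' d.
Proof. by move=> /subsetP D'D Dd x y /D'D xD /D'D; apply: Dd. Qed.

Lemma dcode_weight D d w i : mindist_ge D d -> 0 \in D -> (2 * i < d)%N ->
  hdist w 0 = i -> dcode D w = i.
Proof.
move=> Dd D0 lt_2i_d wi; apply/eqP; rewrite eqn_leq -{1}wi dcode_le //=.
apply: dcode_ge => [|c cD]; first by rewrite -wi hdist_le_dim.
have [->|c0] := eqVneq c 0; first by rewrite wi.
have := Dd _ _ D0 cD; rewrite eq_sym => /(_ c0).
have := hdist_triangle 0 w c; rewrite [hdist 0 w]hdistC wi.
move: (hdist 0 c) (hdist w c) => d0c dwc; lia.
Qed.

Lemma in_setstab X D g :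
  (g \in setstab X D) = (g \in X) && ([set g x | x in D] == D).
Proof. by rewrite inE. Qed.

Lemma in_stab0 X g : (g \in stab0 X) = (g \in X) && (g 0 == 0).
Proof. by rewrite inE. Qed.

Lemma imset_perm_stable g D : {subset D <= [preim g of D]} -> [set g x | x in D] = D.
Proof.
move=> gD; apply/eqP; rewrite eqEcard card_imset ?leqnn ?andbT; last exact: perm_inj.
by apply/subsetP => _ /imsetP[x xD ->]; exact: gD.
Qed.

Lemma group_set_setstab (G : {group {perm V}}) D : group_set (setstab G D).
Proof.
apply/group_setP; split.
  by rewrite in_setstab group1 imset_perm_stable ?eqxx // => x; rewrite inE perm1.
move=> g h; rewrite !in_setstab => /andP[gG /eqP gD] /andP[hG /eqP hD].
rewrite groupM //=; apply/eqP; rewrite -[RHS]hD -[in RHS]gD -imset_comp.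
by apply: eq_imset => x; rewrite permM.
Qed.
Canonical setstab_group (G : {group {perm V}}) D := Group (group_set_setstab G D).

Lemma group_set_AutC D : group_set (AutC D).
Proof. exact: group_set_setstab. Qed.
Canonical AutC_group D := Group (group_set_AutC D).

Lemma AutC_sub_AutH D : AutC D \subset AutH m.
Proof. by apply/subsetP => g /setIdP[]. Qed.

Lemma AutC_imset D g : g \in AutC D -> [set g x | x in D] = D.
Proof. by case/setIdP=> _ /eqP. Qed.

Lemma setstab_sub X D : setstab X D \subset X.
Proof. by apply/subsetP => g /setIdP[]. Qed.

Lemma TD_sub_Btr D : TD D \subset Btr m.
Proof. exact/imsetS/subsetT. Qed.

Lemma Btr_sub_AutH : Btr m \subset AutH m.
Proof.
apply/subsetP => _ /imsetP[b _ ->]; apply/AutHP.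
by exists 1, b => x; rewrite trE col_perm1.
Qed.

Lemma group_set_stab0 (G : {group {perm V}}) : group_set (stab0 G).
Proof.
apply/group_setP; split; first by rewrite in_stab0 group1 /= perm1.
move=> g h; rewrite !in_stab0 => /andP[gG /eqP g0] /andP[hG /eqP h0].
by rewrite groupM //= permM g0 h0.
Qed.
Canonical stab0_group (G : {group {perm V}}) := Group (group_set_stab0 G).

Lemma group_set_TD D : lin_code D -> group_set (TD D).
Proof.
case=> D0 DD; apply/group_setP; split; first by rewrite -tr0 imset_f.
by move=> _ _ /imsetP[a aD ->] /imsetP[b bD ->]; rewrite -trD imset_f ?DD.
Qed.

Lemma TD_stable D b : lin_code D -> b \in D -> [set tr b x | x in D] = D.
Proof. by case=> _ DD bD; apply: imset_perm_stable => x xD; rewrite inE trE DD. Qed.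

Lemma AutH0_additive g : g \in AutH m -> g 0 = 0 -> {morph g : x y / x + y}.
Proof.
case/AutHP=> s [b gE]; rewrite gE col_perm0 add0r => b0 x y.
by rewrite !gE b0 !addr0 col_permD.
Qed.

Lemma tr_conjg g b : g \in AutH m -> g 0 = 0 -> tr b ^ g = tr (g b).
Proof.
move=> gA g0; apply/permP => y.
by rewrite /conjg !permM trE (AutH0_additive gA g0) permKV trE.
Qed.

Lemma linpart_affine g s b :
  (forall x, g x = col_perm s x + b) -> linpart g =1 col_perm s.
Proof. by move=> gE x; rewrite permM trE !gE col_perm0 add0r addrK. Qed.

Lemma linpartM : {in AutH m &, {morph @linpart m : g h / g * h}}.
Proof.
move=> g h /AutHP[s [b gE]] /AutHP[t [c hE]].
have ghE x : (g * h) x = col_perm (t * s) x + (col_perm t b + c).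
  by rewrite permM gE hE col_permD col_permM addrA.
apply/permP => x; rewrite (linpart_affine ghE) permM (linpart_affine gE).
by rewrite (linpart_affine hE) col_permM.
Qed.
Canonical linpart_morphism := Morphism linpartM.

Lemma linpart0 g : g 0 = 0 -> linpart g = g.
Proof. by move=> g0; rewrite /linpart g0 oppr0 tr0 mulg1. Qed.

Lemma linpartK g : linpart g * tr (g 0) = g.
Proof. by rewrite -mulgA -trD addNr tr0 mulg1. Qed.

Lemma kerM_Btr X : kerM X = X :&: Btr m.
Proof.
apply/setP => g; rewrite !inE; case: (g \in X) => //=; apply/eqP/imsetP => [g1|].
  by exists (g 0); rewrite // -{1}(linpartK g) g1 mul1g.
by case=> b _ ->; rewrite /linpart trE add0r -trD subrr tr0.
Qed.

Lemma onM_stab0 X : onM (stab0 X) = stab0 X.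
Proof.
rewrite /onM (eq_in_imset (g := id)) ?imset_id // => g.
by rewrite in_stab0 => /andP[_ /eqP /linpart0].
Qed.

Lemma ker_linpart : 'ker linpart_morphism = Btr m.
Proof.
by rewrite -(setIidPr Btr_sub_AutH) -kerM_Btr; apply/setP => g; rewrite !inE.
Qed.

Lemma stab0_AutC_additive D g : g \in stab0 (AutC D) -> {morph g : x y / x + y}.
Proof.
rewrite in_stab0 => /andP[/(subsetP (AutC_sub_AutH D)) gA /eqP].
exact: AutH0_additive.
Qed.

Lemma completely_transitive_Ci D d i : completely_transitive D -> mindist_ge D d ->
  0 \in D -> (2 * i < d)%N -> (i <= m)%N -> [transitive AutC D, on Ci D i | 'P].
Proof.
move=> Dct Dd D0 lt_2i_d im; have [w wi] := exists_weight im.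
by apply: Dct; rewrite -(dcode_weight Dd D0 lt_2i_d wi); apply: leq_bigmax.
Qed.

Lemma card_AutC D : 0 \in D -> [transitive AutC D, on D | 'P] ->
  #|AutC D| = (#|D| * #|stab0 (AutC D)|)%N.
Proof.
move=> D0 trD; rewrite -(card_orbit_stab 'P (AutC D) 0) (atransP trD _ D0).
congr (_ * _)%N; apply: eq_card => g; rewrite in_setI in_stab0; congr (_ && _).
by apply/astab1P/eqP.
Qed.

Section MaxLinearSubcode.
Variables C Cmax : {set V}.
Hypotheses (C0 : 0 \in C) (Cmax_max : is_max_lin_subcode C Cmax).

Let Cmax_lin : lin_code Cmax. Proof. by case: Cmax_max. Qed.
Let Cmax0 : 0 \in Cmax. Proof. by case: Cmax_lin. Qed.
Let Cmax_sub : Cmax \subset C. Proof. by case: Cmax_max. Qed.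
Let TD_sub_AutC : TD Cmax \subset AutC C. Proof. by case: Cmax_max. Qed.
#[local] Canonical TD_group := Group (group_set_TD Cmax_lin).

Local Notation X := (AutC C).
Local Notation Xmax := (setstab (AutC C) Cmax).
Local Notation X0 := (stab0 (AutC C)).
Local Notation T := (TD Cmax).

Lemma tr_AutC b : (tr b \in X) = (b \in Cmax).
Proof.
apply/idP/idP => [trbX|bCmax]; last exact/(subsetP TD_sub_AutC)/imset_f.
have [_ _ _ Cmax_maximal] := Cmax_max.
pose D := [set b | tr b \in X].
have inD y : (y \in D) = (tr y \in X) by rewrite inE.
suff /subsetP : D \subset Cmax by apply; rewrite inD.
apply: Cmax_maximal.
- split=> [|x y]; rewrite !inD ?tr0 ?group1 // trD; exact: groupM.
- apply/subsetP => x; rewrite inD => /AutC_imset <-.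
  by apply/imsetP; exists 0; rewrite ?trE ?add0r.
- by apply/subsetP => g /imsetP[x]; rewrite inD => xX ->.
Qed.

Lemma AutC_Btr : X :&: Btr m = T.
Proof.
apply/setP => g; rewrite inE.
apply/andP/imsetP => [[gX /imsetP[b _ gb]]|[b bC ->]].
  by exists b; rewrite // -tr_AutC -gb.
by rewrite tr_AutC bC tr_Btr.
Qed.

Lemma stab0_imset_Cmax g : g \in X0 -> [set g x | x in Cmax] = Cmax.
Proof.
rewrite in_stab0 => /andP[gX /eqP g0]; have gA := subsetP (AutC_sub_AutH C) g gX.
apply: imset_perm_stable => b bC.
by rewrite inE -tr_AutC -tr_conjg // groupJ ?tr_AutC.
Qed.

Lemma stab0_sub_setstab : X0 \subset Xmax.
Proof.
apply/subsetP => g gX0; rewrite in_setstab stab0_imset_Cmax // eqxx andbT.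
by case/setIdP: gX0.
Qed.

Lemma TD_sub_setstab : T \subset Xmax.
Proof.
apply/subsetP => _ /imsetP[b bC ->].
by rewrite in_setstab tr_AutC bC TD_stable ?eqxx.
Qed.

Lemma stab0_norm_TD : X0 \subset 'N(T).
Proof.
apply/subsetP => g gX0; rewrite inE.
apply/subsetP => _ /imsetP[_ /imsetP[b bC ->] ->].
have /andP[gX /eqP g0] : (g \in X) && (g 0 == 0) by rewrite -in_stab0.
rewrite tr_conjg ?(subsetP (AutC_sub_AutH C)) // imset_f //.
by rewrite -(stab0_imset_Cmax gX0) imset_f.
Qed.

Lemma setstab_map0 g : g \in Xmax -> g 0 \in Cmax.
Proof. by case/setIdP=> _ /eqP <-; rewrite imset_f. Qed.

Lemma linpart_setstab g : g \in Xmax -> linpart g \in X0.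
Proof.
move=> gXmax; have gX := subsetP (setstab_sub X Cmax) g gXmax.
rewrite in_stab0 groupM //= ?trN ?groupV ?tr_AutC ?setstab_map0 //.
by rewrite permM trE subrr.
Qed.

Lemma sdprod_TD_stab0 : T ><| X0 = Xmax.
Proof.
rewrite sdprodE ?stab0_norm_TD //; last first.
  apply/trivgP/subsetP => _ /setIP[/imsetP[b _ ->]].
  by rewrite in_stab0 trE add0r => /andP[_ /eqP->]; rewrite tr0 inE.
apply/eqP; rewrite eqEsubset mul_subG ?TD_sub_setstab ?stab0_sub_setstab //=.
apply/subsetP => g gXmax; rewrite -(linpartK g) -(normC stab0_norm_TD).
by rewrite mem_mulg ?linpart_setstab ?imset_f ?setstab_map0.
Qed.

Lemma setstab_Btr : Xmax :&: Btr m = T.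
Proof.
apply/eqP; rewrite eqEsubset subsetI TD_sub_setstab TD_sub_Btr andbT.
by rewrite -AutC_Btr setSI ?setstab_sub.
Qed.

Lemma setstab_sub_AutC : Xmax \subset AutC Cmax.
Proof.
apply/subsetP => g /setIdP[gX gCmax]; rewrite inE gCmax andbT.
exact: (subsetP (AutC_sub_AutH C)).
Qed.

Lemma setstab_Ci_to_weight d i w0 a : mindist_ge C d -> (2 * i < d)%N ->
  [transitive X, on Ci C i | 'P] -> hdist w0 0 = i -> a \in Ci Cmax i ->
  exists2 h, h \in Xmax & h a = w0.
Proof.
move=> Cd lt_2i_d XCi w0i; rewrite inE => /eqP ai.
have [c cCmax ac] := dcode_attained a Cmax0.
have acCi : a - c \in Ci C i.
  by rewrite inE (dcode_weight Cd C0 lt_2i_d) // hdist_sub0 -ac ai.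
have w0Ci : w0 \in Ci C i by rewrite inE (dcode_weight Cd C0 lt_2i_d).
have [g gX] := atransP2 XCi acCi w0Ci; rewrite /= apermE => acw0.
have gA := subsetP (AutC_sub_AutH C) g gX.
have g0 : g 0 = 0.
  (* [g 0] is a codeword within distance [2 i < d] of the codeword [0]. *)
  have g0C : g 0 \in C by rewrite -(AutC_imset gX) imset_f.
  apply/eqP; apply: contraT => /(Cd _ _ g0C C0).
  have := hdist_triangle (g 0) w0 0.
  rewrite {1}acw0 hdist_AutH // [hdist 0 _]hdistC hdist_sub0 -ac ai w0i.
  by move: (hdist (g 0) 0) => k; lia.
exists (tr (- c) * g); last by rewrite permM trE acw0.
apply: groupM; first by rewrite trN groupV (subsetP TD_sub_setstab) ?imset_f.
by rewrite (subsetP stab0_sub_setstab) // in_stab0 gX g0 eqxx.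
Qed.

Lemma transitive_setstab_Ci d i : mindist_ge C d -> (2 * i < d)%N -> (i <= m)%N ->
  [transitive X, on Ci C i | 'P] -> [transitive Xmax, on Ci Cmax i | 'P].
Proof.
move=> Cd lt_2i_d im XCi; have [w0 w0i] := exists_weight im.
have w0Ci : w0 \in Ci Cmax i.
  by rewrite inE (dcode_weight (mindist_ge_sub Cmax_sub Cd) Cmax0 lt_2i_d).
apply/imsetP; exists w0 => //; apply/setP => a.
apply/idP/orbitP => [aCi|[h hXmax <-]].
  have [h hXmax ha] := setstab_Ci_to_weight Cd lt_2i_d XCi w0i aCi.
  by exists h^-1; rewrite ?groupV //= apermE -ha permK.
have /setIdP[hX /eqP hCmax] := hXmax.
have hA := subsetP (AutC_sub_AutH C) h hX.
by move: w0Ci; rewrite !inE /= apermE (dcode_AutH _ Cmax0 hA hCmax).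
Qed.

Lemma card_setstab : #|Xmax| = (#|Cmax| * #|X0|)%N.
Proof. by rewrite -(sdprod_card sdprod_TD_stab0) card_imset //; exact: tr_inj. Qed.

Lemma card_onM_AutC : (#|onM X| * #|Cmax|)%N = #|X|.
Proof.
rewrite /onM -morphimEsub ?AutC_sub_AutH //.
rewrite card_morphim (setIidPr (AutC_sub_AutH C)).
rewrite -indexgI /= ker_linpart AutC_Btr -(card_imset _ tr_inj) mulnC.
exact: Lagrange.
Qed.

End MaxLinearSubcode.

End HammingGraph.

Lemma natr_divMr (R : numFieldType) (a b c : nat) : (0 < c)%N ->
  ((a * c)%N%:R / (b * c)%N%:R = a%:R / b%:R :> R)%R.
Proof. by move=> c0; rewrite !natrM -mulf_div divff ?mulr1 // pnatr_eq0 -lt0n. Qed.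

Theorem proposition2p7 (m : nat) (C Cmax : {set vert m}) :
  (0 : vert m)%R \in C ->
  completely_transitive C ->
  mindist_ge C 5 ->
  is_max_lin_subcode C Cmax ->
  2 <= dimc Cmax <= m - 2 ->
  let X := AutC C in
  let Xmax := setstab X Cmax in
  let X0 := stab0 X in
  let T := TD Cmax in
  [/\ (* 1 *) (T ><| X0)%g = Xmax,
      (* 2 *) nbr_trans Xmax Cmax 2 /\ mindist_ge Cmax 5,
      (* 3 *) kerM X = kerM Xmax /\ kerM X = X :&: Btr m /\
              X :&: Btr m = Xmax :&: Btr m /\ Xmax :&: Btr m = T,
      (* 4 *) forall g, g \in X0 ->
                {morph g : x y / (x + y)%R} /\ [set g x | x in Cmax] = Cmax
    & (* 5 *) (#|C|%:R / #|Cmax|%:R = #|X|%:R / #|Xmax|%:R :> rat)%R /\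
              (#|X|%:R / #|Xmax|%:R = #|onM X|%:R / #|onM X0|%:R :> rat)%R ].
Proof.
move=> C0 Cct Cd Cmax_max /andP[dim2 dimm] X Xmax X0 T.
have [[Cmax0 _] Cmax_sub _ _] := Cmax_max.
have XCi i : (i <= 2)%N -> [transitive X, on Ci C i | 'P].
  by move=> i2; apply: (completely_transitive_Ci Cct Cd C0); lia.
have cardX : #|X| = (#|C| * #|X0|)%N.
  by apply: card_AutC; rewrite // -{2}(Ci0 C0) XCi.
have X0_gt0 : (0 < #|X0|)%N by apply/card_gt0P; exists 1%g; apply: group1.
have Cmax_gt0 : (0 < #|Cmax|)%N by apply/card_gt0P; exists 0%R.
split.
- exact: sdprod_TD_stab0.
- split; last exact: mindist_ge_sub Cd.
  split=> [|i i2]; first exact: setstab_sub_AutC.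
  by apply: (transitive_setstab_Ci C0 Cmax_max Cd); [lia | lia | exact: XCi].
- by rewrite !kerM_Btr (AutC_Btr C0 Cmax_max) (setstab_Btr C0 Cmax_max).
- move=> g gX0; split; first exact: stab0_AutC_additive gX0.
  exact: (stab0_imset_Cmax C0 Cmax_max gX0).
rewrite (card_setstab C0 Cmax_max); split; first by rewrite cardX natr_divMr.
rewrite onM_stab0 -(card_onM_AutC C0 Cmax_max) [(#|Cmax| * _)%N]mulnC.
exact: natr_divMr.
Qed.
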